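(* Fix a complex number $q$ with $0<|q|<1$ and an integer $k\ge0$, and let $\tilde\sigma_{-k-1}(x)=\frac{(-1)^kq^{\binom{k+1}{2}}}{(x;q)_{k+1}(qx^{-1};q)_k}$. Then the meromorphic differential $\tilde\sigma_{-k-1}(x)\,dx$ on $\mathbb{CP}^1$ has simple poles at $x=q^j$ for $j=0,\pm1,\dots,\pm k$, with \[ \operatorname{Res}_{x=q^j}\tilde\sigma_{-k-1}\,dx=-\frac{(-1)^{k+j}q^{\binom{j+1}{2}+\binom{k+1}{2}}}{(q;q)_{k-j}\,(q;q)_{k+j}}, \] where $\binom{j+1}{2}=\frac{j(j+1)}{2}$ also for negative $j$. Additionally, $\tilde\sigma_{-1}(x)\,dx$ has a simple pole at $x=\infty$ with $\operatorname{Res}_{x=\infty}\tilde\sigma_{-1}\,dx=1$.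
   Context: $(a;q)_n=\prod_{j=0}^{n-1}(1-aq^j)$ denotes the $q$-Pochhammer symbol. *)

From HB Require Import structures.
From mathcomp Require Import all_boot all_order all_algebra.
From mathcomp Require Import complex.
From mathcomp Require Import all_classical all_reals topology normedtype.
Set Implicit Arguments. Unset Strict Implicit. Unset Printing Implicit Defensive.
Import Order.TTheory GRing.Theory Num.Theory.
Import numFieldNormedType.Exports.
Local Open Scope classical_set_scope.
Local Open Scope ring_scope.

Definition qpoch {F : comPzRingType} (a q : F) (n : nat) : F :=
  \prod_(j < n) (1 - a * q ^+ j).

Definition sigma_tilde {F : fieldType} (q : F) (k : nat) (x : F) : F :=
  (-1) ^+ k * q ^+ 'C(k.+1, 2) / (qpoch x q k.+1 * qpoch (q / x) q k).

(* The meromorphic differential f(x) dx has a simple pole at the finite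
   point a with residue r: (x - a) f(x) tends to r as x -> a (x <> a),
   and r <> 0 (so the pole is genuinely of order exactly one). *)
Definition simple_pole_res {K : numFieldType} (f : K -> K) (a r : K) : Prop :=
  r != 0 /\ ((fun x => (x - a) * f x) @ a^' --> r).

(* The differential f(x) dx has a simple pole at x = infinity with residue r:
   in the chart w = 1/x, f(x) dx = f(1/w) (-1/w^2) dw, which must have a
   simple pole at w = 0 with residue r. *)
Definition simple_pole_res_infty {K : numFieldType} (f : K -> K) (r : K) : Prop :=
  simple_pole_res (fun w => f w^-1 * (- w ^- 2)) 0 r.

(* Put y = q^k x.  Reversing the two q-Pochhammer products gives
     q^binom(k+1,2) y^k (x;q)_{k+1} (q/x;q)_k = (-1)^{k+1} prod_{i=0}^{2k} (y - q^i),
   so sigma~_{-k-1}(x) = -q^{2 binom(k+1,2)} y^k / prod_{i=0}^{2k} (y - q^i).  Since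
   0 < |q| < 1 the q^i are distinct, so the poles are the simple roots x = q^{m-k},
   0 <= m <= 2k, and the residue there is the numerator divided by
   q^k prod_{i <> m} (q^m - q^i) = q^k (-1)^m q^{binom(m,2) + m(2k-m)} (q;q)_m (q;q)_{2k-m}.
   At infinity sigma~_{-1}(x) = 1/(1-x), and in the chart w = 1/x the differential
   becomes dw / (w (1 - w)). *)

From HB Require Import structures.
From mathcomp Require Import all_boot all_order all_algebra.
From mathcomp Require Import complex.
From mathcomp Require Import all_classical all_reals topology normedtype.
From mathcomp Require Import ring zify.
Import Order.TTheory GRing.Theory Num.Theory.
Import numFieldNormedType.Exports.
Local Open Scope classical_set_scope.
Local Open Scope ring_scope.

Section QPochhammerRing.
Variable R : comPzRingType.
Implicit Types q : R.

Lemma prod_qpow_sub_lt q m :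
  \prod_(0 <= i < m) (q ^+ m - q ^+ i) = (-1) ^+ m * q ^+ 'C(m, 2) * qpoch q q m.
Proof.
rewrite (eq_big_nat _ _ (F2 := fun i => (-1 * q ^+ i) * (1 - q ^+ (m - i)))); last first.
  move=> i /andP[_ hi]; rewrite mulN1r mulrBr mulr1 mulNr -exprD subnKC; last lia.
  by rewrite opprK addrC.
rewrite big_split big_split /= prodr_const_nat subn0 prodrXr bin2_sum.
congr (_ * _).
rewrite big_nat_rev /qpoch -(big_mkord xpredT (fun j => 1 - q * q ^+ j)).
apply: eq_big_nat => i /andP[_ hi]; rewrite add0n -exprS; congr (1 - q ^+ _); lia.
Qed.

Lemma prod_qpow_sub_gt q m N : (m < N)%N ->
  \prod_(m.+1 <= i < N) (q ^+ m - q ^+ i) =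
  q ^+ (m * (N - m.+1)) * qpoch q q (N - m.+1).
Proof.
move=> mN; rewrite (big_addn 0 N m.+1).
rewrite (eq_big_nat _ _ (F2 := fun i => q ^+ m * (1 - q * q ^+ i))); last first.
  by move=> i _; rewrite mulrBr mulr1 -exprS -exprD; congr (_ - q ^+ _); lia.
by rewrite big_split /= prodr_const_nat subn0 exprM /qpoch big_mkord.
Qed.

Lemma prod_qpow_sub_neq q m N : (m < N)%N ->
  \prod_(0 <= i < N | i != m) (q ^+ m - q ^+ i) =
  (-1) ^+ m * q ^+ ('C(m, 2) + m * (N - m.+1)) * qpoch q q m * qpoch q q (N - m.+1).
Proof.
move=> mN; rewrite (big_cat_nat (leq0n m) (ltnW mN)).
rewrite [\prod_(m <= i < N | _) _]big_ltn_cond //= eqxx.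
have below : \prod_(0 <= i < m | i != m) (q ^+ m - q ^+ i) =
    \prod_(0 <= i < m) (q ^+ m - q ^+ i).
  by apply: congr_big_nat => // i /andP[_ im]; rewrite ltn_eqF.
have above : \prod_(m.+1 <= i < N | i != m) (q ^+ m - q ^+ i) =
    \prod_(m.+1 <= i < N) (q ^+ m - q ^+ i).
  by apply: congr_big_nat => // i /andP[mi _]; rewrite gtn_eqF.
by rewrite below above prod_qpow_sub_lt prod_qpow_sub_gt //= exprD; ring.
Qed.
End QPochhammerRing.

Section QPochhammer.
Variable F : fieldType.
Implicit Types q x : F.

Lemma qpoch_rev q x k :
  q ^+ 'C(k.+1, 2) * qpoch x q k.+1 = \prod_(0 <= i < k.+1) (q ^+ i - q ^+ k * x).
Proof.
have exp_sum : 'C(k.+1, 2) = (\sum_(0 <= i < k.+1) (k - i))%N.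
  by rewrite big_nat_rev -bin2_sum; apply: eq_big_nat => i /andP[_ hi] /=; lia.
rewrite exp_sum -prodrXr /qpoch -(big_mkord xpredT (fun i => 1 - x * q ^+ i)).
rewrite -big_split big_nat_rev /=; apply: esym; apply: eq_big_nat => i /andP[_ hi].
have ik : (i <= k)%N by rewrite -ltnS.
by rewrite add0n subSS mulrBr mulr1 mulrCA -exprD subKn // subnKC // mulrC.
Qed.

Lemma qpoch_qdivx_rev q x k : x != 0 ->
  (q ^+ k * x) ^+ k * qpoch (q / x) q k =
  \prod_(0 <= i < k) (q ^+ k * x - q ^+ (i + k.+1)).
Proof.
move=> x0.
have -> : (q ^+ k * x) ^+ k = \prod_(0 <= i < k) (q ^+ k * x) by rewrite prodr_const_nat subn0.
rewrite /qpoch big_mkord -big_split.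
by rewrite big_mkord; apply: eq_bigr => i _ /=; rewrite exprD exprS; field.
Qed.

Lemma sigma_tildeE q k x : q != 0 -> x != 0 ->
  sigma_tilde q k x = - (q ^+ 'C(k.+1, 2)) ^+ 2 * (q ^+ k * x) ^+ k /
                      \prod_(0 <= i < k.+1 + k) (q ^+ k * x - q ^+ i).
Proof.
move=> q0 x0; set c := q ^+ 'C(k.+1, 2) * (q ^+ k * x) ^+ k.
have c0 : c != 0 by rewrite mulf_neq0 ?expf_neq0 ?mulf_neq0 ?expf_neq0.
have prod_sign : \prod_(0 <= i < k.+1) (q ^+ i - q ^+ k * x) =
    (-1) ^+ k.+1 * \prod_(0 <= i < k.+1) (q ^+ k * x - q ^+ i).
  have -> : (-1) ^+ k.+1 = \prod_(0 <= i < k.+1) (-1 : F) by rewrite prodr_const_nat subn0.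
  rewrite -big_split /=.
  by apply: eq_bigr => i _; rewrite mulN1r opprB.
have denE : c * (qpoch x q k.+1 * qpoch (q / x) q k) =
    (-1) ^+ k.+1 * \prod_(0 <= i < k.+1 + k) (q ^+ k * x - q ^+ i).
  rewrite mulrACA qpoch_rev qpoch_qdivx_rev // prod_sign -mulrA (big_cat_nat _ (leq_addr k _)) //=.
  by rewrite (big_addn 0 (k.+1 + k) k.+1) addKn.
have sqr_sign : (-1) ^+ k * (-1) ^+ k = 1 :> F.
  by rewrite -expr2 sqrr_sign.
rewrite /sigma_tilde -(mulKf c0 (qpoch x q k.+1 * qpoch (q / x) q k)) denE.
rewrite invfM invrK invfM invr_sign exprS /c.
set P := \prod_(_ <= i < _) _.
transitivity (- ((-1) ^+ k * (-1) ^+ k) * (q ^+ 'C(k.+1, 2)) ^+ 2 * (q ^+ k * x) ^+ k / P).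
  by ring.
by rewrite sqr_sign mulN1r.
Qed.
End QPochhammer.

Lemma qpoch_neq0 (K : numDomainType) (q : K) n : `|q| < 1 -> qpoch q q n != 0.
Proof.
move=> q_lt1; apply/prodf_neq0 => i _; rewrite -exprS subr_eq0 eq_sym.
apply/negP => /eqP/(congr1 Num.norm); rewrite normrX normr1 => /eqP.
by rewrite lt_eqF // exprn_ilt1.
Qed.

Lemma triangular_shift (k m n : nat) (j : int) :
  m%:Z = k%:Z + j -> n%:Z = k%:Z - j ->
  ((j * (j + 1)) %/ 2)%Z = ('C(k.+1, 2) + m * k)%:Z - ('C(m, 2) + m * n + k)%:Z.
Proof.
have bin2_double l : ('C(l, 2) * 2 + l = l * l)%N.
  by elim: l => [|l IH] //; rewrite binS bin1; lia.
move=> mE nE; have bk := bin2_double k.+1; have bm := bin2_double m.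
have -> : j * (j + 1) = (('C(k.+1, 2) + m * k)%:Z - ('C(m, 2) + m * n + k)%:Z) * 2.
  by lia.
by rewrite mulzK.
Qed.

Section SimplePoles.
Variable K : numFieldType.
Implicit Types (f g h : K -> K) (a c : K).

Lemma simple_pole_res_near f g a :
  g a != 0 -> {for a, continuous g} ->
  (\forall x \near a^', (x - a) * f x = g x) -> simple_pole_res f a (g a).
Proof.
move=> ga0 g_cont fg; split => //.
apply: cvg_trans (cvg_within_filter _ g_cont).
by apply: near_eq_cvg; apply: filterS fg => x /esym.
Qed.

Lemma dnbhs_neq0 a : a != 0 -> \forall x \near a^', x != 0.
Proof. by move=> a0; apply: cvgr_neq0 a0; apply: cvg_within_filter; exact: cvg_id. Qed.

Lemma cvg_exprn (T : Type) (F : set_system T) (FF : Filter F) (u : T -> K) (l : K) n :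
  u x @[x --> F] --> l -> u x ^+ n @[x --> F] --> l ^+ n.
Proof.
move=> ul; elim: n => [|n IH].
  by rewrite expr0; under eq_cvg do rewrite expr0; exact: cvg_cst.
by rewrite exprS; under eq_cvg do rewrite exprS; exact: cvgM.
Qed.

Lemma simple_pole_res_prod f h c (b : nat -> K) (m N : nat) :
  (m < N)%N -> c != 0 ->
  (\forall x \near (b m / c)^', f x = h x / \prod_(0 <= i < N) (c * x - b i)) ->
  {for b m / c, continuous h} -> h (b m / c) != 0 ->
  \prod_(0 <= i < N | i != m) (b m - b i) != 0 ->
  simple_pole_res f (b m / c)
    (h (b m / c) / (c * \prod_(0 <= i < N | i != m) (b m - b i))).
Proof.
move=> mN c0 fE h_cont ha0 r0; set a := b m / c.
pose Q x := \prod_(0 <= i < N | i != m) (c * x - b i).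
have ca : c * a = b m by rewrite /a mulrC divfK.
have Qa : Q a = \prod_(0 <= i < N | i != m) (b m - b i) by rewrite /Q ca.
have residue_factor x : x - a != 0 ->
    (x - a) * (h x / \prod_(0 <= i < N) (c * x - b i)) = h x / (c * Q x).
  move=> xa; have cxb : c * x - b m = c * (x - a) by rewrite mulrBr ca.
  have m_in : m \in index_iota 0 N by rewrite mem_iota subn0 add0n.
  rewrite (bigD1_seq m m_in (iota_uniq _ _)) /= cxb [c * (x - a)]mulrC -mulrA invfM.
  by rewrite mulrCA mulVKf.
rewrite -Qa; apply: (@simple_pole_res_near f (fun x => h x / (c * Q x))).
- by rewrite mulf_neq0 // invr_eq0 Qa mulf_neq0.
- apply: (@cvgM _ _ (nbhs a)); first exact: h_cont.
  apply: cvgV; first by rewrite Qa mulf_neq0.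
  apply: cvgM; first exact: cvg_cst.
  apply: (@cvg_big K _ *%R 1 _ mul_continuous) => i _.
  by apply: cvgB; [apply: cvgM; [exact: cvg_cst | exact: cvg_id] | exact: cvg_cst].
- near=> x.
  have xa : x - a != 0 by rewrite subr_eq0; near: x; exact: nbhs_dnbhs_neq.
  by rewrite (near fE x) // residue_factor.
Unshelve. all: by end_near.
Qed.
End SimplePoles.

Lemma sigma_tilde_simple_pole (K : numFieldType) (q : K) k m :
  `|q| < 1 -> q != 0 -> (m < k.+1 + k)%N ->
  simple_pole_res (sigma_tilde q k) (q ^+ m / q ^+ k)
    (- (q ^+ 'C(k.+1, 2)) ^+ 2 * (q ^+ m) ^+ k /
     (q ^+ k * \prod_(0 <= i < k.+1 + k | i != m) (q ^+ m - q ^+ i))).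
Proof.
move=> q_lt1 q0 mN; have qk0 : q ^+ k != 0 by rewrite expf_neq0.
have pole0 : q ^+ m / q ^+ k != 0 by rewrite mulf_neq0 ?invr_eq0 ?expf_neq0.
pose h x := - (q ^+ 'C(k.+1, 2)) ^+ 2 * (q ^+ k * x) ^+ k.
have ha : h (q ^+ m / q ^+ k) = - (q ^+ 'C(k.+1, 2)) ^+ 2 * (q ^+ m) ^+ k.
  by rewrite /h mulrCA mulfV // mulr1.
rewrite -ha; apply: (@simple_pole_res_prod _ _ h (q ^+ k) (fun i => q ^+ i)) => //.
- by near=> x; apply: sigma_tildeE => //; near: x; exact: dnbhs_neq0.
- apply: (@cvgM _ _ (nbhs _)); first exact: cvg_cst.
  by apply: cvg_exprn; apply: cvgM; [exact: cvg_cst | exact: cvg_id].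
- by rewrite ha mulf_neq0 ?oppr_eq0 ?expf_neq0.
- by rewrite prod_qpow_sub_neq // !mulf_neq0 ?qpoch_neq0 ?signr_eq0 ?expf_neq0.
Unshelve. all: by end_near.
Qed.

Lemma sigma_tilde0_simple_pole_infty (K : numFieldType) (q : K) :
  simple_pole_res_infty (sigma_tilde q 0) 1.
Proof.
have chart w : w != 0 -> (w - 0) * (sigma_tilde q 0 w^-1 * - w ^- 2) = (1 - w)^-1.
  move=> w0; rewrite /sigma_tilde /qpoch big_ord1 big_ord0 /= !expr0 !mulr1 !mul1r subr0.
  (* at w = 1 both sides vanish, as 0^-1 = 0 *)
  have [->|w1] := eqVneq w 1; first by rewrite invr1 subrr !invr0 !mul0r mulr0.
  by field; rewrite w0 subr_eq0 eq_sym w1 subr_eq0 w1.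
suff : simple_pole_res_infty (sigma_tilde q 0) (1 - 0)^-1 by rewrite subr0 invr1.
apply: (@simple_pole_res_near _ _ (fun w => (1 - w)^-1)).
- by rewrite subr0 invr1 oner_neq0.
- apply: (@cvgV _ _ (nbhs _)); first by rewrite subr0 oner_neq0.
  by apply: cvgB; [exact: cvg_cst | exact: cvg_id].
- by near=> w; apply: chart; near: w; exact: nbhs_dnbhs_neq.
Unshelve. all: by end_near.
Qed.

Theorem lemma5p1 (R : realType) (q : R[i]) (k : nat) :
  0 < `|q| < 1 ->
  (forall j : int, - (k%:Z) <= j <= k%:Z ->
     simple_pole_res (sigma_tilde q k) (q ^ j)
       (- ((-1) ^+ (absz (k%:Z + j)) * q ^ ((j * (j + 1)) %/ 2)%Z * q ^+ 'C(k.+1, 2)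
           / (qpoch q q (absz (k%:Z - j)) * qpoch q q (absz (k%:Z + j))))))
  /\ simple_pole_res_infty (sigma_tilde q 0) 1.
Proof.
move=> /andP[q_gt0 q_lt1]; have q0 : q != 0 by rewrite -normr_gt0.
split=> [j /andP[jlo jhi] | ]; last exact: sigma_tilde0_simple_pole_infty.
set m := absz (k%:Z + j); set n := absz (k%:Z - j); set cK := 'C(k.+1, 2).
have mE : m%:Z = k%:Z + j by rewrite /m; lia.
have nE : n%:Z = k%:Z - j by rewrite /n; lia.
have mN : (m < k.+1 + k)%N by lia.
have Nm : (k.+1 + k - m.+1)%N = n by lia.
have -> : q ^ j = q ^+ m / q ^+ k.
  by rewrite (_ : j = m%:Z - k%:Z) ?expfzDr ?exprnN //; lia.
have -> : - ((-1) ^+ m * q ^ ((j * (j + 1)) %/ 2)%Z * q ^+ cK / (qpoch q q n * qpoch q q m)) =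
    - (q ^+ cK) ^+ 2 * (q ^+ m) ^+ k /
    (q ^+ k * \prod_(0 <= i < k.+1 + k | i != m) (q ^+ m - q ^+ i)).
  rewrite prod_qpow_sub_neq // Nm (triangular_shift _ _ _ _ mE nE) -/cK; clearbody cK.
  rewrite expfzDr // -exprnN -exprnP !exprD !exprM !invfM invr_sign; field.
  by rewrite !qpoch_neq0 ?expf_neq0.
exact: sigma_tilde_simple_pole.
Qed.
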